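(* Let $\varphi:\mathbb{N}\to[1,\infty)$ be a function. Suppose the random walk on $X$ induced by $\mu$ admits a Lyapunov function $V$ with contraction factor $\alpha<1$ (i.e. $\pi(\mu)V\le\alpha V+\beta$ for some $\beta\ge0$), and set $K_n=V^{-1}([0,\varphi(n)])$. (i) If $\lambda(\varphi)<\log(\alpha^{-1})$, then the random walk is $(K_n)_n$-uniformly recurrent; moreover $n_0$ in that definition can be chosen independently of $\epsilon$. (ii) If $\varphi$ has sub-exponential growth, then the random walk is $(K_n)_n$-uniformly recurrent on average.
   Context: Standing assumptions: $G$ is a locally compact $\sigma$-compact metrizable group acting ergodically on a locally compact $\sigma$-compact metrizable space $X$ with a $G$-invariant probability measure $m_X$; $\mu$ is a Borel probability measure on $G$; $\pi(\mu)F(x)=\int_G F(gx)\,d\mu(g)$ for nonnegative measurable $F$; $\mu^{*n}*\delta_x$ is the push-forward of $\mu^{\otimes n}\otimes\delta_x$ under $(g_n,\dots,g_1,x)\mapsto g_n\cdots g_1x$. A Lyapunov function is a proper continuous $V:X\to[0,\infty)$ with constants $\alpha<1$, $\beta\ge0$ such that $\pi(\mu)V\le\alpha V+\beta$ pointwise. For subsets $K_n\subset X$, the random walk is $(K_n)_n$-uniformly recurrent if for every $\epsilon>0$ there are $n_0\in\mathbb{N}$ and a compact $M\subset X$ with $\mu^{*n}*\delta_x(M)\ge1-\epsilon$ for all $n\ge n_0$ and $x\in K_n$; it is $(K_n)_n$-uniformly recurrent on average if the same holds with $\frac1n\sum_{k=0}^{n-1}\mu^{*k}*\delta_x$ in place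 of $\mu^{*n}*\delta_x$. The Lyapunov exponent of $\varphi$ is $\lambda(\varphi)=\limsup_{n\to\infty}\frac1n\log\varphi(n)$; $\varphi$ has sub-exponential growth if $\lambda(\varphi)=0$. *)

From HB Require Import structures.
From mathcomp Require Import all_boot all_order all_algebra.
From mathcomp Require Import all_classical all_reals all_analysis.
Set Implicit Arguments. Unset Strict Implicit. Unset Printing Implicit Defensive.
Import Order.TTheory GRing.Theory Num.Theory.
Import numFieldNormedType.Exports.
Local Open Scope classical_set_scope.
Local Open Scope ring_scope.

Definition Borel (T : ptopologicalType) := g_sigma_algebraType (@open T).

Section Defs.
Context (R : realType).

Definition metrizable_space (T : topologicalType) : Prop :=
  exists d : T -> T -> R,
    [/\ forall x y, 0 <= d x y,
        forall x y, d x y = 0 <-> x = y,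
        forall x y, d x y = d y x,
        forall x y z, d x z <= d x y + d y z &
        forall A : set T, open A <->
          (forall x, A x -> exists2 e : R, 0 < e & [set y | d x y < e] `<=` A)].

Definition sigma_compact_space (T : topologicalType) : Prop :=
  exists K : nat -> set T, (forall n, compact (K n)) /\ \bigcup_n K n = setT.

Definition lcsc_metrizable (T : topologicalType) : Prop :=
  [/\ locally_compact [set: T], sigma_compact_space T & metrizable_space T].

Definition topological_group (G : topologicalType)
  (mul : G -> G -> G) (inv : G -> G) (one : G) : Prop :=
  [/\ forall a b c, mul a (mul b c) = mul (mul a b) c,
      forall a, mul one a = a /\ mul a one = a,
      forall a, mul (inv a) a = one /\ mul a (inv a) = one,
      continuous (fun p : G * G => mul p.1 p.2) &
      continuous inv].

Definition continuous_action (G X : topologicalType)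
  (mul : G -> G -> G) (one : G) (act : G -> X -> X) : Prop :=
  [/\ forall x, act one x = x,
      forall g h x, act (mul g h) x = act g (act h x) &
      continuous (fun p : G * X => act p.1 p.2)].

Definition invariant_ergodic (G X : ptopologicalType) (act : G -> X -> X)
  (m : probability (Borel X) R) : Prop :=
  (forall g (A : set (Borel X)), measurable A -> m (act g @^-1` A) = m A) /\
  (forall A : set (Borel X), measurable A -> (forall g, act g @^-1` A = A) ->
     m A = 0%E \/ m A = 1%E).

Definition proper_map (X : topologicalType) (V : X -> R) : Prop :=
  forall K : set R, compact K -> compact (V @^-1` K).

Definition lyapunov (G X : ptopologicalType) (act : G -> X -> X)
  (mu : probability (Borel G) R) (V : X -> R) (alpha beta : R) : Prop :=
  [/\ (forall x, 0 <= V x) /\ continuous V, proper_map V, alpha < 1, 0 <= beta &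
      forall x : X, (\int[mu]_(g in [set: Borel G]) (V (act g x))%:E <=
                    (alpha * V x + beta)%:E)%E].

(** mu^{*n} * delta_x, as a set function on X, via iterated integration
    (integrating out g_1 first):
    mu^{*0}*delta_x (A) = delta_x(A),
    mu^{*(n+1)}*delta_x (A) = int mu^{*n}*delta_{g x}(A) dmu(g). *)
Fixpoint conv_dirac (G X : ptopologicalType) (act : G -> X -> X)
  (mu : probability (Borel G) R) (n : nat) (x : X) (A : set X) : \bar R :=
  match n with
  | 0 => (\1_A x)%:E
  | n'.+1 => (\int[mu]_(g in [set: Borel G]) conv_dirac act mu n' (act g x) A)%E
  end.

Definition uniformly_recurrent (G X : ptopologicalType) (act : G -> X -> X)
  (mu : probability (Borel G) R) (K : nat -> set X) : Prop :=
  forall eps : R, 0 < eps -> exists n0 : nat, exists2 M : set X, compact M &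
    forall n, (n0 <= n)%N -> forall x, K n x ->
      ((1 - eps)%:E <= conv_dirac act mu n x M)%E.

Definition uniformly_recurrent_on_average (G X : ptopologicalType)
  (act : G -> X -> X) (mu : probability (Borel G) R) (K : nat -> set X) : Prop :=
  forall eps : R, 0 < eps -> exists n0 : nat, exists2 M : set X, compact M &
    forall n, (n0 <= n)%N -> forall x, K n x ->
      ((1 - eps)%:E <= (n%:R^-1)%:E * \sum_(k < n) conv_dirac act mu k x M)%E.

Definition lyap_exp (phi : nat -> R) : \bar R :=
  limn_esup (fun n => (ln (phi n) / n%:R)%:E).

End Defs.

(* The Lyapunov inequality iterates to pi(mu)^n V <= alpha^n V + B with B := beta/(1-alpha),
   so by Markov's inequality the walk started at x lies in the compact sublevel set {V <= R}
   at time n with probability at least 1 - (alpha^n V x + B)/R.  On K_n we have V x <= phi n,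
   and alpha^n phi n <= 1 as soon as log phi n <= n log(1/alpha).  If lambda(phi) < log(1/alpha)
   this holds for all large n, uniformly in eps.  If phi is sub-exponential it holds after an
   escape time m = O(log phi n), which is o(n), so all but a vanishing fraction of the first
   n steps see probability close to 1. *)
From HB Require Import structures.
From mathcomp Require Import all_boot all_order all_algebra.
From mathcomp Require Import all_classical all_reals all_analysis.
From mathcomp Require Import measurable_realfun.
From mathcomp Require Import ring lra.
Set Implicit Arguments. Unset Strict Implicit. Unset Printing Implicit Defensive.
Import Order.TTheory GRing.Theory Num.Theory.
Import numFieldNormedType.Exports.
Local Open Scope classical_set_scope.
Local Open Scope ring_scope.

(* No measurability is needed: the integral is monotone in the positive and negative parts. *)
Lemma le_integral_pointwise d (T : measurableType d) (R : realType)
  (mu : {measure set T -> \bar R}) (f g : T -> \bar R) :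
  (forall x, (f x <= g x)%E) -> (\int[mu]_x f x <= \int[mu]_x g x)%E.
Proof.
move=> fg; rewrite /integral !patch_setT.
have fg' : {in setT, forall x, (f x <= g x)%E} by move=> x _; exact: fg.
apply: leeB.
  apply: ereal_sup_le => _ [h /= hf <-]; exists h => //= x.
  by apply: (le_trans (hf x)); apply: (funepos_le fg'); rewrite in_setT.
apply: ereal_sup_le => _ [h /= hf <-]; exists h => //= x.
by apply: (le_trans (hf x)); apply: (funeneg_le fg'); rewrite in_setT.
Qed.

Lemma continuous_measurable_Borel (R : realType) (T : ptopologicalType) (f : T -> R) :
  continuous f -> measurable_fun [set: Borel T] f.
Proof.
move=> /continuousP cf.
apply: (measurability _ (measurable_realfun.RGenOpens.measurableE R)).
move=> _ [_ [a [b ->]] <-]; apply: measurableI => //.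
by apply: sub_sigma_algebra; apply: cf; exact: interval_open.
Qed.

Lemma integral_cst_subZ_ge (R : realType) (T : ptopologicalType)
  (mu : probability (Borel T) R) (f : T -> R) (c k A : R) :
  measurable_fun [set: Borel T] f -> (forall t, 0 <= f t) -> 0 <= k ->
  (\int[mu]_(t in [set: Borel T]) (f t)%:E <= A%:E)%E ->
  ((c - k * A)%:E <= \int[mu]_(t in [set: Borel T]) (c - k * f t)%:E)%E.
Proof.
move=> mf f0 k0 fA.
have If : mu.-integrable [set: Borel T] (EFin \o f).
  apply/integrableP; split; first exact/measurable_EFinP.
  under eq_integral => t _ do rewrite /= ger0_norm ?f0 //.
  exact: le_lt_trans fA (ltry _).
have fin_f : (\int[mu]_(t in [set: Borel T]) (f t)%:E)%E \is a fin_num.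
  rewrite ge0_fin_numE; first exact: le_lt_trans fA (ltry _).
  by apply: integral_ge0 => t _; rewrite lee_fin.
have Ic : mu.-integrable [set: Borel T] (EFin \o cst c).
  exact: finite_measure_integrable_cst.
have Ikf : mu.-integrable [set: Borel T] (EFin \o (fun t => k * f t)).
  exact: (integrableZl measurableT k If).
under eq_integral => t _ do rewrite EFinB.
rewrite (integralB_EFin _ Ic Ikf) // -/(cst c%:E) integral_cst //.
rewrite [X in (c%:E * X)%E]probability_setT mule1.
under eq_integral => t _ do rewrite EFinM.
rewrite integralZl // -(fineK fin_f) -EFinM -EFinB lee_fin lerD2l lerN2.
by apply: ler_wpM2l => //; rewrite -lee_fin fineK.
Qed.

Lemma continuous_act_orbit (G X : topologicalType) (act : G -> X -> X) :
  continuous (fun p : G * X => act p.1 p.2) -> forall x : X, continuous (act^~ x).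
Proof.
move=> ac x g; apply: (@continuous_comp _ _ _ (fun g : G => (g, x)) _ _ _ (ac _)).
by apply: cvg_pair; [exact: cvg_id | exact: cvg_cst].
Qed.

Lemma compact_sublevel (R : realType) (X : topologicalType) (V : X -> R) (r : R) :
  (forall x, 0 <= V x) -> proper_map V -> compact [set y | V y <= r].
Proof.
move=> V0 Vp; have -> : [set y | V y <= r] = V @^-1` [set s | s \in `[0, r]].
  by apply/seteqP; split => y /=; rewrite in_itv /= ?V0 // => /andP[].
exact/Vp/segment_compact.
Qed.

Lemma conv_dirac_ge0 (R : realType) (G X : ptopologicalType) (act : G -> X -> X)
  (mu : probability (Borel G) R) n x (M : set X) :
  (0 <= conv_dirac act mu n x M)%E.
Proof.
elim: n x => [|n IH] x /=; first by rewrite lee_fin /indic ler0n.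
by apply: integral_ge0 => g _; exact: IH.
Qed.

Lemma sum_tail_ge (R : realFieldType) (n m : nat) (a : R) : 0 <= a ->
  (n%:R - m%:R) * a <= \sum_(k < n) (if (m <= k)%N then a else 0).
Proof.
move=> a_ge0; elim: n => [|n IH]; first by rewrite big_ord0 sub0r mulNr oppr_le0 mulr_ge0.
rewrite big_ord_recr /= -addn1 natrD.
have : 0 <= \sum_(k < n) (if (m <= k)%N then a else 0) by apply: sumr_ge0 => i _; case: ifP.
case: leqP => [_|lt_nm]; first by nra.
have : (n + 1)%:R <= m%:R :> R by rewrite ler_nat addn1.
by rewrite natrD; nra.
Qed.

Lemma expr_mul_le1 (R : realType) (alpha p : R) (m : nat) : 0 < alpha -> 0 < p ->
  ln p <= ln alpha^-1 *+ m -> alpha ^+ m * p <= 1.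
Proof.
move=> alpha_gt0 p_gt0; rewrite -lnXn ?invr_gt0 // ler_ln ?posrE ?exprn_gt0 ?invr_gt0 //.
move=> p_le; have alpha_neq0 : alpha != 0 by rewrite gt_eqF.
rewrite -(mulfV (expf_neq0 m alpha_neq0)) -exprVn.
by apply: ler_wpM2l => //; rewrite exprn_ge0 // ltW.
Qed.

Lemma limn_esup_lt_eventually (R : realType) (u : nat -> \bar R) (c : \bar R) :
  (limn_esup u < c)%E -> exists N, forall n, (N <= n)%N -> (u n < c)%E.
Proof.
rewrite /limn_esup /limf_esup => /ereal_inf_lt [_ [S [N _ SN] <-]] Sc.
exists N => n Nn; apply: le_lt_trans Sc.
by apply: ereal_sup_ubound; exists n => //; apply: SN.
Qed.

Lemma lyap_exp_lt_expr_decay (R : realType) (phi : nat -> R) (alpha : R) :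
  0 < alpha -> (forall n, 0 < phi n) -> (lyap_exp phi < (ln alpha^-1)%:E)%E ->
  exists N, forall n, (N <= n)%N -> alpha ^+ n * phi n <= 1.
Proof.
move=> alpha_gt0 phi_gt0 /limn_esup_lt_eventually[N growth].
exists (maxn N 1) => n; rewrite geq_max => /andP[Nn n_gt0].
apply: expr_mul_le1 => //; rewrite -mulr_natr ltW //.
by rewrite -ltr_pdivrMr ?ltr0n // -lte_fin; exact: growth.
Qed.

(* The escape time [m] after which [alpha^m phi n <= 1] is about [log phi n / log(1/alpha)],
   hence [o(n)] when [phi] is sub-exponential. *)
Lemma lyap_exp_le0_escape_time (R : realType) (phi : nat -> R) (alpha d : R) :
  0 < alpha -> alpha < 1 -> (forall n, 1 <= phi n) -> (lyap_exp phi <= 0)%E -> 0 < d ->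
  exists N, forall n, (N <= n)%N ->
    exists2 m : nat, m%:R <= d * n%:R & forall k, (m <= k)%N -> alpha ^+ k * phi n <= 1.
Proof.
move=> alpha_gt0 alpha_lt1 phi_ge1 lyap_le0 d_gt0.
have L_gt0 : 0 < ln alpha^-1 by apply: ln_gt0; rewrite invf_gt1.
have lyap_lt : (lyap_exp phi < (d / 2 * ln alpha^-1)%:E)%E.
  by apply: le_lt_trans lyap_le0 _; rewrite lte_fin mulr_gt0 // divr_gt0.
have [N growth] := limn_esup_lt_eventually lyap_lt.
exists (maxn N (Num.Def.trunc (2 / d)).+1) => n; rewrite geq_max => /andP[Nn n_large].
have n_gt : 2 / d < n%:R.
  apply: (@lt_le_trans _ _ ((Num.Def.trunc (2 / d)).+1)%:R); first by rewrite -truncn_le_nat.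
  by rewrite ler_nat.
have n_gt0 : 0 < n%:R :> R by apply: lt_trans n_gt; rewrite divr_gt0.
set y := ln (phi n) / ln alpha^-1.
have y_ge0 : 0 <= y by apply: divr_ge0; [exact: ln_ge0 | exact: ltW].
have y_lt : y < d / 2 * n%:R.
  have := growth n Nn; rewrite lte_fin ltr_pdivrMr // ltr_pdivrMr //.
  by rewrite mulrAC.
exists (Num.Def.trunc y).+1.
  have : 1 <= d / 2 * n%:R by rewrite mulrC -ler_pdivrMr ?divr_gt0 // div1r invf_div ltW.
  have : ((Num.Def.trunc y).+1)%:R <= y + 1 by rewrite -addn1 natrD lerD2r truncn_le.
  by lra.
have phi_gt0 : 0 < phi n by apply: lt_le_trans (phi_ge1 n).
move=> k /subnKC <-; rewrite exprD -mulrA.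
apply: le_trans (expr_mul_le1 (m := (Num.Def.trunc y).+1) alpha_gt0 phi_gt0 _); last first.
  by rewrite -mulr_natr mulrC -ler_pdivrMr // ltW // -truncn_le_nat.
apply: ler_wpM2l; first by rewrite exprn_ge0 ?ltW.
by rewrite ler_piMl ?exprn_ile1 ?ltW.
Qed.

Section Drift.
Variables (R : realType) (G X : ptopologicalType) (act : G -> X -> X).
Variables (mu : probability (Borel G) R) (V : X -> R) (alpha beta : R).
Hypotheses (V_ge0 : forall x, 0 <= V x) (V_cont : continuous V).
Hypothesis act_cont : continuous (fun p : G * X => act p.1 p.2).
Hypotheses (alpha_gt0 : 0 < alpha) (alpha_lt1 : alpha < 1) (beta_ge0 : 0 <= beta).
Hypothesis drift : forall x : X,
  (\int[mu]_(g in [set: Borel G]) (V (act g x))%:E <= (alpha * V x + beta)%:E)%E.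

Let B := beta / (1 - alpha).

Let B_ge0 : 0 <= B. Proof. by rewrite divr_ge0 // subr_ge0 ltW. Qed.

(* The exact invariant [alpha^n V x + B (1 - alpha^n)] is what makes the induction close:
   one application of the drift inequality maps it to its value at [n.+1]. *)
Lemma conv_dirac_sublevel_ge_iter (r : R) : 0 < r -> forall n x,
  ((1 - (alpha ^+ n * V x + B * (1 - alpha ^+ n)) / r)%:E
     <= conv_dirac act mu n x [set y | (V y <= r)%R])%E.
Proof.
move=> r_gt0; elim=> [|n IH] x /=.
  rewrite expr0 subrr mulr0 addr0 mul1r lee_fin /indic.
  have [Vx_le|Vx_gt] := leP (V x) r.
    by rewrite mem_set // lerBlDr lerDl divr_ge0 // ltW.
  rewrite memNset /=; last by apply/negP; rewrite -ltNge.
  by rewrite subr_le0 ler_pdivlMr // mul1r ltW.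
apply: le_trans; last by apply: le_integral_pointwise => g; exact: IH.
have mV : measurable_fun [set: Borel G] (fun g => V (act g x)).
  apply: (@continuous_measurable_Borel R G (fun g => V (act g x))) => g.
  by apply: (@continuous_comp _ _ _ (act^~ x) V); [exact: continuous_act_orbit | exact: V_cont].
have -> : (fun g => ((1 - (alpha ^+ n * V (act g x) + B * (1 - alpha ^+ n)) / r)%:E)) =
    (fun g => ((1 - B * (1 - alpha ^+ n) / r) - alpha ^+ n / r * V (act g x))%:E).
  by apply: funext => g; congr (_%:E); field; rewrite gt_eqF.
apply: le_trans; last first.
  apply: (@integral_cst_subZ_ge R G mu (fun g => V (act g x))) => //.
  by rewrite divr_ge0 // ?exprn_ge0 // ltW.
have alpha_neq1 : 1 - alpha != 0 by rewrite subr_eq0 gt_eqF.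
by rewrite lee_fin le_eqVlt /B exprS; apply/orP; left; apply/eqP; field; rewrite alpha_neq1 gt_eqF.
Qed.

Lemma conv_dirac_sublevel_ge (eps : R) : 0 < eps -> forall n x,
  alpha ^+ n * V x <= 1 ->
  ((1 - eps)%:E <= conv_dirac act mu n x [set y | (V y <= (1 + B) / eps)%R])%E.
Proof.
move=> eps_gt0 n x decay.
have r_gt0 : 0 < (1 + B) / eps by rewrite divr_gt0 // ltr_wpDr.
apply: le_trans (conv_dirac_sublevel_ge_iter r_gt0 n x).
rewrite lee_fin lerD2l lerN2 ler_pdivrMr // mulrCA mulfV ?gt_eqF // mulr1 mulrBr mulr1.
by have := mulr_ge0 B_ge0 (exprn_ge0 n (ltW alpha_gt0)); lra.
Qed.

Lemma mean_conv_dirac_sublevel_ge (e : R) (n m : nat) (x : X) :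
  0 < e <= 1 -> (0 < n)%N -> m%:R <= e / 2 * n%:R ->
  (forall k, (m <= k)%N -> alpha ^+ k * V x <= 1) ->
  ((1 - e)%:E <= (n%:R^-1)%:E *
     \sum_(k < n) conv_dirac act mu k x [set y | (V y <= (1 + B) / (e / 2))%R])%E.
Proof.
move=> /andP[e_gt0 e_le1] n_gt0 m_small decay.
have n_gt0' : 0 < n%:R :> R by rewrite ltr0n.
apply: (@le_trans _ _ ((n%:R^-1)%:E *
    (\sum_(k < n) (if (m <= k)%N then 1 - e / 2 else 0))%:E)%E); last first.
  apply: lee_wpmul2l; first by rewrite lee_fin invr_ge0 ltW.
  rewrite -sumEFin; apply: lee_sum => k _; case: ifPn => mk; last exact: conv_dirac_ge0.
  by apply: conv_dirac_sublevel_ge; [rewrite divr_gt0 | exact: decay].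
rewrite -EFinM lee_fin ler_pdivlMl //.
apply: le_trans (sum_tail_ge _ _ _); last by lra.
have : 0 <= (e / 2 * n%:R - m%:R) * (1 - e / 2) by apply: mulr_ge0; lra.
have : 0 <= n%:R * e * e by rewrite !mulr_ge0 // ltW.
by nra.
Qed.

End Drift.

Theorem proposition4p12 (R : realType) (G X : ptopologicalType)
  (mul : G -> G -> G) (inv : G -> G) (one : G) (act : G -> X -> X)
  (mX : probability (Borel X) R) (mu : probability (Borel G) R)
  (phi : nat -> R) (V : X -> R) (alpha beta : R) :
  lcsc_metrizable R G -> topological_group mul inv one ->
  lcsc_metrizable R X -> continuous_action mul one act ->
  invariant_ergodic act mX ->
  (forall n, 1 <= phi n) ->
  0 < alpha -> lyapunov act mu V alpha beta ->
  let K := fun n => [set x | V x <= phi n] in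
  ((lyap_exp phi < (ln (alpha^-1))%:E)%E ->
     uniformly_recurrent act mu K /\
     exists n0 : nat, forall eps : R, 0 < eps -> exists2 M : set X, compact M &
       forall n, (n0 <= n)%N -> forall x, K n x ->
         ((1 - eps)%:E <= conv_dirac act mu n x M)%E) /\
  (lyap_exp phi = 0%E -> uniformly_recurrent_on_average act mu K).
Proof.
move=> _ _ _ [_ _ act_cont] _ phi_ge1 alpha_gt0 [[V_ge0 V_cont] V_proper alpha_lt1 beta_ge0 drift] K.
have walk_in_sublevel := conv_dirac_sublevel_ge V_ge0 V_cont act_cont alpha_gt0 alpha_lt1 beta_ge0 drift.
have mean_in_sublevel := mean_conv_dirac_sublevel_ge V_ge0 V_cont act_cont alpha_gt0 alpha_lt1 beta_ge0 drift.
have decay_on_K n k x : K n x -> alpha ^+ k * phi n <= 1 -> alpha ^+ k * V x <= 1.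
  by move=> Kx; apply: le_trans; rewrite ler_wpM2l // exprn_ge0 // ltW.
split=> [lyap_lt | lyap_eq0].
  have phi_gt0 n : 0 < phi n by apply: lt_le_trans (phi_ge1 n).
  have [N decay] := lyap_exp_lt_expr_decay alpha_gt0 phi_gt0 lyap_lt.
  suff rec eps : 0 < eps -> exists2 M : set X, compact M & forall n, (N <= n)%N ->
      forall x, K n x -> ((1 - eps)%:E <= conv_dirac act mu n x M)%E.
    by split; [move=> eps /rec; exists N | exists N].
  move=> eps_gt0; exists [set y | V y <= (1 + beta / (1 - alpha)) / eps].
    exact: compact_sublevel.
  by move=> n Nn x Kx; apply: walk_in_sublevel => //; apply: decay_on_K Kx (decay n Nn).
move=> eps eps_gt0; set e := Num.min eps 1.
have e_gt0 : 0 < e by rewrite lt_min eps_gt0 ltr01.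
have lyap_le0 : (lyap_exp phi <= 0)%E by rewrite lyap_eq0.
have [N escape] := lyap_exp_le0_escape_time alpha_gt0 alpha_lt1 phi_ge1 lyap_le0
  (divr_gt0 e_gt0 (ltr0Sn _ 1)).
exists (maxn N 1), [set y | V y <= (1 + beta / (1 - alpha)) / (e / 2)].
  exact: compact_sublevel.
move=> n; rewrite geq_max => /andP[Nn n_gt0] x Kx.
have [m m_small decay] := escape n Nn.
apply: le_trans (mean_in_sublevel e n m x _ n_gt0 m_small _).
- by rewrite lee_fin lerD2l lerN2 ge_min lexx.
- by rewrite e_gt0 ge_min lexx orbT.
- by move=> k mk; apply: decay_on_K Kx (decay k mk).
Qed.
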